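(* Let $\mathscr E$ be a category with pullbacks and let $(\mathscr L,\mathscr R)$ be a compatible pair of protocalibrations of $\mathscr E$. The spans in $\mathscr E$ whose left leg is invertible and whose right leg is in $\mathscr R$ are morphisms of ${}_{\mathscr L}\mathrm{Spn}\,\mathscr E$, and as such they form a protocalibration $\mathscr R_*$ of the bicategory ${}_{\mathscr L}\mathrm{Spn}\,\mathscr E$.
   Context: $\mathscr E$ is regarded as a locally discrete bicategory. A protocalibration of a category with pullbacks is a class of morphisms containing isomorphisms, closed under composition with isomorphisms and composition, and stable under pullback. $\Delta_u$ is pullback along $u$; $u$ is powerful if $\Delta_u$ has a right adjoint $\Pi_u$; $\mathscr P$ = class of powerful morphisms. $(\mathscr L,\mathscr R)$ compatible means $\mathscr L\subseteq\mathscr P\cap\mathscr R$ and $\Pi_rv\in\mathscr R$ for $r\in\mathscr L$, $v\in\mathscr R$. ${}_{\mathscr L}\mathrm{Spn}\,\mathscr E$: objects of $\mathscr E$, morphisms $U\to V$ spans $U\xleftarrow{u}S\xrightarrow{v}V$ with $u\in\mathscr L$, composed by pullback, 2-morphisms $(u,S,v)\Rightarrow(u',S',v')$ isomorphism classes of $f:S'\to S$ with $uf=u'$, $vf=v'$. A protocalibration of a bicategory $\mathscr C$ is a set of morphisms containing all equivalences, closed under isomorphism and composition, such that bicategorical pullbacks of its members along arbitrary morphisms exist and are in it, and whose members $p$ are groupoid opfibrations (each functor $\mathscr C(U,p)$ is a groupoid opfibration: its opposite has all morphisms cartesian and lifts every $\phi:b\to px$ up to an isomorphism $b\cong pz$).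 *)

Record Cat := mkCat {
  Ob :> Type;
  Hom : Ob -> Ob -> Type;
  idm : forall A, Hom A A;
  cmp : forall A B C, Hom B C -> Hom A B -> Hom A C;
  cmp_assoc : forall A B C D (h : Hom C D) (g : Hom B C) (f : Hom A B),
      cmp A C D h (cmp A B C g f) = cmp A B D (cmp B C D h g) f;
  cmp_idl : forall A B (f : Hom A B), cmp A B B (idm B) f = f;
  cmp_idr : forall A B (f : Hom A B), cmp A A B f (idm A) = f }.
Arguments Hom {c} _ _.
Arguments idm {c} A.
Arguments cmp_assoc {c A B C D} h g f.
Arguments cmp_idl {c A B} f.
Arguments cmp_idr {c A B} f.
Arguments cmp {c A B C} _ _.
Infix "∘" := cmp (at level 40, left associativity).

Definition is_iso {E : Cat} {A B : E} (f : Hom A B) : Prop :=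
  exists g : Hom B A, g ∘ f = idm A /\ f ∘ g = idm B.

Definition is_pullback {E : Cat} {A B C P : E} (u : Hom A C) (v : Hom B C)
    (p1 : Hom P A) (p2 : Hom P B) : Prop :=
  u ∘ p1 = v ∘ p2 /\
  forall (X : E) (a : Hom X A) (b : Hom X B), u ∘ a = v ∘ b ->
    exists h : Hom X P, (p1 ∘ h = a /\ p2 ∘ h = b) /\
      forall h' : Hom X P, p1 ∘ h' = a -> p2 ∘ h' = b -> h' = h.

Record PBCat := mkPBCat {
  pcat :> Cat;
  pb : forall A B C : pcat, Hom A C -> Hom B C -> pcat;
  pb1 : forall (A B C : pcat) (u : Hom A C) (v : Hom B C), Hom (pb A B C u v) A;
  pb2 : forall (A B C : pcat) (u : Hom A C) (v : Hom B C), Hom (pb A B C u v) B;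
  pb_ok : forall (A B C : pcat) (u : Hom A C) (v : Hom B C),
      is_pullback u v (pb1 A B C u v) (pb2 A B C u v) }.
Arguments pb {p A B C} u v.
Arguments pb1 {p A B C} u v.
Arguments pb2 {p A B C} u v.
Arguments pb_ok {p A B C} u v.

Definition morclass (E : Cat) := forall A B : E, Hom A B -> Prop.

Definition protocal {E : PBCat} (M : morclass E) : Prop :=
  (forall (A B : E) (f : Hom A B), is_iso f -> M _ _ f) /\
  (forall (A B C : E) (f : Hom A B) (i : Hom B C), M _ _ f -> is_iso i -> M _ _ (i ∘ f)) /\
  (forall (A B C : E) (i : Hom A B) (f : Hom B C), is_iso i -> M _ _ f -> M _ _ (f ∘ i)) /\
  (forall (A B C : E) (f : Hom A B) (g : Hom B C), M _ _ f -> M _ _ g -> M _ _ (g ∘ f)) /\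
  (forall (A B C P : E) (u : Hom A C) (v : Hom B C) (p1 : Hom P A) (p2 : Hom P B),
      is_pullback u v p1 p2 -> M _ _ u -> M _ _ p2).

(* ---------- powerful morphisms ----------
   For u : U -> V, Delta_u : E/V -> E/U sends (y : Y -> V) to
   (pb1 u y : pb u y -> U), and a map h : z -> y over V to the induced map m.
   [pi_value u x y eps] says that (y, eps : Delta_u y -> x) is a universal
   arrow from Delta_u to x, i.e. y = Pi_u x with counit eps. *)
Definition Delta_map {E : PBCat} {U V Y Z : E} (u : Hom U V) (y : Hom Y V) (z : Hom Z V)
    (h : Hom Z Y) (m : Hom (pb u z) (pb u y)) : Prop :=
  pb1 u y ∘ m = pb1 u z /\ pb2 u y ∘ m = h ∘ pb2 u z.

Definition pi_value {E : PBCat} {U V X Y : E} (u : Hom U V) (x : Hom X U)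
    (y : Hom Y V) (eps : Hom (pb u y) X) : Prop :=
  x ∘ eps = pb1 u y /\
  forall (Z : E) (z : Hom Z V) (g : Hom (pb u z) X), x ∘ g = pb1 u z ->
    exists h : Hom Z Y,
      (y ∘ h = z /\ forall m, Delta_map u y z h m -> eps ∘ m = g) /\
      forall h' : Hom Z Y,
        (y ∘ h' = z /\ forall m, Delta_map u y z h' m -> eps ∘ m = g) -> h' = h.

(* Delta_u has a right adjoint Pi_u *)
Definition powerful {E : PBCat} {U V : E} (u : Hom U V) : Prop :=
  forall (X : E) (x : Hom X U), exists (Y : E) (y : Hom Y V) (eps : Hom (pb u y) X),
    pi_value u x y eps.

Definition compatible {E : PBCat} (L R : morclass E) : Prop :=
  (forall (A B : E) (r : Hom A B), L _ _ r -> powerful r /\ R _ _ r) /\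
  (forall (U V X Y : E) (r : Hom U V) (v : Hom X U) (y : Hom Y V) (eps : Hom (pb r y) X),
      L _ _ r -> R _ _ v -> pi_value r v y eps -> R _ _ y).

Record Span {E : PBCat} (U V : E) := mkSpan { apex : E; sl : Hom apex U; sr : Hom apex V }.
Arguments mkSpan {E U V} apex sl sr.
Arguments apex {E U V} s.
Arguments sl {E U V} s.
Arguments sr {E U V} s.

(* a morphism U -> V of _L Spn E *)
Definition Lspan {E : PBCat} (L : morclass E) {U V : E} (s : Span U V) : Prop :=
  L _ _ (sl s).

Definition scomp {E : PBCat} {U V W : E} (t : Span V W) (s : Span U V) : Span U W :=
  @mkSpan E U W (pb (sr s) (sl t)) (sl s ∘ pb1 (sr s) (sl t)) (sr t ∘ pb2 (sr s) (sl t)).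

Definition sid {E : PBCat} (A : E) : Span A A := @mkSpan E A A A (idm A) (idm A).

(* 2-cells s => t : morphisms f : apex t -> apex s commuting with the legs;
   vertical composite of f : s => t and g : t => w is f ∘ g : s => w *)
Definition cell {E : PBCat} {U V : E} (s t : Span U V) (f : Hom (apex t) (apex s)) : Prop :=
  sl s ∘ f = sl t /\ sr s ∘ f = sr t.

Definition icell {E : PBCat} {U V : E} (s t : Span U V) (f : Hom (apex t) (apex s)) : Prop :=
  cell s t f /\ exists g : Hom (apex s) (apex t),
    cell t s g /\ f ∘ g = idm (apex s) /\ g ∘ f = idm (apex t).

(* whiskering p . f : p.s => p.t of f : s => t (g is the induced map) *)
Definition whr {E : PBCat} {U A C : E} (p : Span A C) (s t : Span U A)
    (f : Hom (apex t) (apex s)) (g : Hom (apex (scomp p t)) (apex (scomp p s))) : Prop :=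
  pb1 (sr s) (sl p) ∘ g = f ∘ pb1 (sr t) (sl p) /\ pb2 (sr s) (sl p) ∘ g = pb2 (sr t) (sl p).

(* whiskering f . h : s.h => t.h of f : s => t *)
Definition whl {E : PBCat} {X P C : E} (s t : Span P C) (h : Span X P)
    (f : Hom (apex t) (apex s)) (g : Hom (apex (scomp t h)) (apex (scomp s h))) : Prop :=
  pb1 (sr h) (sl s) ∘ g = pb1 (sr h) (sl t) /\ pb2 (sr h) (sl s) ∘ g = f ∘ pb2 (sr h) (sl t).

(* associator (x.y).z => x.(y.z) *)
Definition assoc_rel {E : PBCat} {A B C D : E} (x : Span C D) (y : Span B C) (z : Span A B)
    (a : Hom (apex (scomp x (scomp y z))) (apex (scomp (scomp x y) z))) : Prop :=
  pb1 (sr z) (sl (scomp x y)) ∘ a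
    = pb1 (sr z) (sl y) ∘ pb1 (sr (scomp y z)) (sl x) /\
  pb1 (sr y) (sl x) ∘ (pb2 (sr z) (sl (scomp x y)) ∘ a)
    = pb2 (sr z) (sl y) ∘ pb1 (sr (scomp y z)) (sl x) /\
  pb2 (sr y) (sl x) ∘ (pb2 (sr z) (sl (scomp x y)) ∘ a)
    = pb2 (sr (scomp y z)) (sl x).

Definition is_equiv {E : PBCat} (L : morclass E) {A B : E} (e : Span A B) : Prop :=
  Lspan L e /\ exists (e' : Span B A) (a : Hom (apex (sid A)) (apex (scomp e' e)))
                      (b : Hom (apex (sid B)) (apex (scomp e e'))),
    Lspan L e' /\ icell (scomp e' e) (sid A) a /\ icell (scomp e e') (sid B) b.

(* ---------- bicategorical pullbacks ----------
   Square  p . q ==th==> f . g  (p : A -> C, f : B -> C, q : P -> A, g : P -> B).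
   For each X the induced functor
     Phi_X : _LSpn(X,P) -> IsoComma(_LSpn(X,p), _LSpn(X,f))
   sends h to (q.h, g.h, i_h) with
     i_h = assoc_{f,g,h} . (th * h) . assoc_{p,q,h}^{-1} : p.(q.h) => f.(g.h). *)
Definition phi_iso {E : PBCat} {A B C P X : E} (p : Span A C) (f : Span B C)
    (q : Span P A) (g : Span P B) (th : Hom (apex (scomp f g)) (apex (scomp p q)))
    (h : Span X P) (i : Hom (apex (scomp f (scomp g h))) (apex (scomp p (scomp q h)))) : Prop :=
  exists a1 a2 m, assoc_rel p q h a1 /\ assoc_rel f g h a2 /\
    whl (scomp p q) (scomp f g) h th m /\ a1 ∘ i = m ∘ a2.

(* (al, be) is a morphism (a, b, io) -> (a', b', io') of the iso-comma category *)
Definition compat {E : PBCat} {A B C X : E} (p : Span A C) (f : Span B C)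
    (a : Span X A) (b : Span X B) (io : Hom (apex (scomp f b)) (apex (scomp p a)))
    (a' : Span X A) (b' : Span X B) (io' : Hom (apex (scomp f b')) (apex (scomp p a')))
    (al : Hom (apex a') (apex a)) (be : Hom (apex b') (apex b)) : Prop :=
  exists ma mb, whr p a a' al ma /\ whr f b b' be mb /\ io ∘ mb = ma ∘ io'.

Definition is_bipb {E : PBCat} (L : morclass E) {A B C P : E} (p : Span A C) (f : Span B C)
    (q : Span P A) (g : Span P B) (th : Hom (apex (scomp f g)) (apex (scomp p q))) : Prop :=
  Lspan L q /\ Lspan L g /\ icell (scomp p q) (scomp f g) th /\
  forall X : E,
    (* Phi_X fully faithful *)
    (forall (h h' : Span X P)
            (i : Hom (apex (scomp f (scomp g h))) (apex (scomp p (scomp q h))))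
            (i' : Hom (apex (scomp f (scomp g h'))) (apex (scomp p (scomp q h'))))
            (al : Hom (apex (scomp q h')) (apex (scomp q h)))
            (be : Hom (apex (scomp g h')) (apex (scomp g h))),
        Lspan L h -> Lspan L h' -> phi_iso p f q g th h i -> phi_iso p f q g th h' i' ->
        cell (scomp q h) (scomp q h') al -> cell (scomp g h) (scomp g h') be ->
        compat p f (scomp q h) (scomp g h) i (scomp q h') (scomp g h') i' al be ->
        exists ga : Hom (apex h') (apex h),
          (cell h h' ga /\ whr q h h' ga al /\ whr g h h' ga be) /\
          forall ga', (cell h h' ga' /\ whr q h h' ga' al /\ whr g h h' ga' be) -> ga' = ga) /\
    (* Phi_X essentially surjective *)
    (forall (a : Span X A) (b : Span X B) (io : Hom (apex (scomp f b)) (apex (scomp p a))),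
        Lspan L a -> Lspan L b -> icell (scomp p a) (scomp f b) io ->
        exists (h : Span X P)
               (i : Hom (apex (scomp f (scomp g h))) (apex (scomp p (scomp q h))))
               (al : Hom (apex a) (apex (scomp q h))) (be : Hom (apex b) (apex (scomp g h))),
          Lspan L h /\ phi_iso p f q g th h i /\
          icell (scomp q h) a al /\ icell (scomp g h) b be /\
          compat p f (scomp q h) (scomp g h) i a b io al be).

(* ---------- groupoid opfibrations ----------
   the functor _LSpn(U,p) = p . - : _LSpn(U,A) -> _LSpn(U,C) *)
Definition gopfib {E : PBCat} (L : morclass E) {A C : E} (p : Span A C) (U : E) : Prop :=
  (* every morphism of _LSpn(U,A) is opcartesian *)
  (forall (x z w : Span U A) (ps : Hom (apex z) (apex x)) (ch : Hom (apex w) (apex x))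
          (ga : Hom (apex (scomp p w)) (apex (scomp p z))),
      Lspan L x -> Lspan L z -> Lspan L w -> cell x z ps -> cell x w ch ->
      cell (scomp p z) (scomp p w) ga ->
      (exists mps mch, whr p x z ps mps /\ whr p x w ch mch /\ mps ∘ ga = mch) ->
      exists de : Hom (apex w) (apex z),
        (cell z w de /\ ps ∘ de = ch /\ whr p z w de ga) /\
        forall de', (cell z w de' /\ ps ∘ de' = ch /\ whr p z w de' ga) -> de' = de) /\
  (* every phi : p.x => b lifts to psi : x => z, up to an iso iota : b => p.z *)
  (forall (x : Span U A) (b : Span U C) (ph : Hom (apex b) (apex (scomp p x))),
      Lspan L x -> Lspan L b -> cell (scomp p x) b ph ->
      exists (z : Span U A) (ps : Hom (apex z) (apex x)) (io : Hom (apex (scomp p z)) (apex b))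
             (mps : Hom (apex (scomp p z)) (apex (scomp p x))),
        Lspan L z /\ cell x z ps /\ icell b (scomp p z) io /\
        whr p x z ps mps /\ mps = ph ∘ io).

Definition spanclass (E : PBCat) := forall U V : E, Span U V -> Prop.

Definition bprotocal {E : PBCat} (L : morclass E) (M : spanclass E) : Prop :=
  (forall (U V : E) (s : Span U V), M _ _ s -> Lspan L s) /\
  (forall (U V : E) (s : Span U V), is_equiv L s -> M _ _ s) /\
  (forall (U V : E) (s t : Span U V) (f : Hom (apex t) (apex s)),
      Lspan L s -> Lspan L t -> M _ _ s -> icell s t f -> M _ _ t) /\
  (forall (U V W : E) (s : Span U V) (t : Span V W), M _ _ s -> M _ _ t -> M _ _ (scomp t s)) /\
  (forall (A B C : E) (p : Span A C) (f : Span B C), M _ _ p -> Lspan L f ->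
      (exists (P : E) (q : Span P A) (g : Span P B) (th : Hom (apex (scomp f g)) (apex (scomp p q))),
          is_bipb L p f q g th) /\
      (forall (P : E) (q : Span P A) (g : Span P B) (th : Hom (apex (scomp f g)) (apex (scomp p q))),
          is_bipb L p f q g th -> M _ _ g)) /\
  (forall (A C : E) (p : Span A C), M _ _ p -> forall U : E, gopfib L p U).

Definition Rstar {E : PBCat} (R : morclass E) : spanclass E :=
  fun U V s => is_iso (sl s) /\ R _ _ (sr s).

(* Spans with invertible left leg are, up to isomorphism, the morphisms of E themselves, and
   most of the protocalibration axioms reduce to E: such spans compose by pulling back along an
   isomorphism, an equivalence of spans has invertible legs (each leg becomes invertible after
   composing with a pullback projection that is split epi), and whiskering with such a span is
   essentially the identity, hence a groupoid opfibration.

   For a bicategorical pullback of p = (iso, r) along an L-span f = (l, v), take the right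
   adjoint Pi_l of pullback along l, applied to the pullback of r along v; call it y : Y -> B.
   With g = (1, y) and q read off the counit, the universal property of Pi_l is exactly the
   universal property of the iso-comma object, and y lies in R by compatibility.  Any other
   bicategorical pullback is equivalent to this one; the comparison equivalence has invertible
   legs, so its leg g' is isomorphic to g composed with an R_*-span and lies in R_* as well. *)

From Stdlib Require Import ClassicalEpsilon Setoid.

Lemma cat_congr2 {E : Cat} {A B C D : E} {u : Hom B C} {v : Hom A B} {w : Hom A C} :
  u ∘ v = w -> forall x : Hom C D, x ∘ u ∘ v = x ∘ w.
Proof. intros H x. rewrite <- cmp_assoc, H. reflexivity. Qed.

Lemma cat_congr3 {E : Cat} {A B C D F : E} {u : Hom C D} {v : Hom B C} {t : Hom A B}
  {w : Hom A D} : u ∘ v ∘ t = w -> forall x : Hom D F, x ∘ u ∘ v ∘ t = x ∘ w.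
Proof. intros H x. rewrite <- H, !cmp_assoc. reflexivity. Qed.

Lemma cat_congr4 {E : Cat} {A B C D F G : E} {u : Hom D F} {u' : Hom C D} {v : Hom B C}
  {t : Hom A B} {w : Hom A F} :
  u ∘ u' ∘ v ∘ t = w -> forall x : Hom F G, x ∘ u ∘ u' ∘ v ∘ t = x ∘ w.
Proof. intros H x. rewrite <- H, !cmp_assoc. reflexivity. Qed.

(* Composites are kept left-associated by [cat_norm]; [crw H] then rewrites with an
   equation between composites of up to four morphisms anywhere inside such a chain. *)
Ltac cat_norm := repeat rewrite ?cmp_assoc, ?cmp_idl, ?cmp_idr.
Ltac cat_norm_in H := repeat rewrite ?cmp_assoc, ?cmp_idl, ?cmp_idr in H.
Ltac crw H := cat_norm;
  first [ rewrite H | rewrite (cat_congr2 H) | rewrite (cat_congr3 H) | rewrite (cat_congr4 H)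
        | setoid_rewrite H | setoid_rewrite (cat_congr2 H) | setoid_rewrite (cat_congr3 H)
        | setoid_rewrite (cat_congr4 H) ]; cat_norm.

Section Isomorphisms.
Context {E : Cat}.

Lemma iso_id (A : E) : is_iso (idm A).
Proof. exists (idm A). rewrite cmp_idl. auto. Qed.

Lemma iso_comp {A B C : E} (f : Hom A B) (g : Hom B C) :
  is_iso f -> is_iso g -> is_iso (g ∘ f).
Proof.
  intros [f' [F1 F2]] [g' [G1 G2]]. exists (f' ∘ g'). split.
  - crw G1. exact F1.
  - crw F2. exact G2.
Qed.

Lemma iso_mono {A B X : E} (f : Hom A B) (a b : Hom X A) : is_iso f -> f ∘ a = f ∘ b -> a = b.
Proof.
  intros [g [G1 _]] H. rewrite <- (cmp_idl a), <- (cmp_idl b), <- G1, <- !cmp_assoc, H. auto.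
Qed.

Lemma iso_epi {A B X : E} (f : Hom A B) (a b : Hom B X) : is_iso f -> a ∘ f = b ∘ f -> a = b.
Proof.
  intros [g [_ G2]] H. rewrite <- (cmp_idr a), <- (cmp_idr b), <- G2, !cmp_assoc, H. auto.
Qed.

Lemma iso_cancel_l {A B C : E} (u : Hom B C) (c : Hom A B) :
  is_iso u -> is_iso (u ∘ c) -> is_iso c.
Proof.
  intros [v [V1 V2]] Iuc. replace c with (v ∘ (u ∘ c)) by (crw V1; auto).
  apply iso_comp; [exact Iuc | exists u; auto].
Qed.

Definition split_epi {A B : E} (f : Hom A B) : Prop := exists s : Hom B A, f ∘ s = idm B.

Lemma split_epi_of_cmp_iso {A B C : E} (u : Hom B C) (p : Hom A B) :
  is_iso (u ∘ p) -> split_epi u.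
Proof. intros [g [_ G2]]. exists (p ∘ g). crw G2. auto. Qed.

Lemma iso_of_cmp_split_epi {A B C : E} (u : Hom B C) (p : Hom A B) :
  is_iso (u ∘ p) -> split_epi p -> is_iso u.
Proof.
  intros [g [G1 G2]] [s Hs]. cat_norm_in G1. exists (p ∘ g). split.
  - rewrite <- (cmp_idr (p ∘ g ∘ u)), <- Hs. crw G1. auto.
  - cat_norm. exact G2.
Qed.

End Isomorphisms.

Section Pullbacks.
Context {E : PBCat}.

Lemma pb_comm {A B C : E} (u : Hom A C) (v : Hom B C) : u ∘ pb1 u v = v ∘ pb2 u v.
Proof. exact (proj1 (pb_ok u v)). Qed.

Lemma is_pullback_lift {A B C P X : E} (u : Hom A C) (v : Hom B C) (p1 : Hom P A)
  (p2 : Hom P B) (a : Hom X A) (b : Hom X B) :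
  is_pullback u v p1 p2 -> u ∘ a = v ∘ b -> exists h, p1 ∘ h = a /\ p2 ∘ h = b.
Proof. intros [_ Hu] H. destruct (Hu X a b H) as [k [Hk _]]. eauto. Qed.

Lemma is_pullback_sym {A B C P : E} (u : Hom A C) (v : Hom B C) (p1 : Hom P A) (p2 : Hom P B) :
  is_pullback u v p1 p2 -> is_pullback v u p2 p1.
Proof.
  intros [Hc Hu]. split; auto.
  intros X a b H. destruct (Hu X b a (eq_sym H)) as [h [[h1 h2] hu]].
  exists h. split; auto.
Qed.

Lemma pb_ext {A B C X : E} (u : Hom A C) (v : Hom B C) (h h' : Hom X (pb u v)) :
  pb1 u v ∘ h = pb1 u v ∘ h' -> pb2 u v ∘ h = pb2 u v ∘ h' -> h = h'.
Proof.
  destruct (pb_ok u v) as [Hc Hu]. intros H1 H2.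
  destruct (Hu X (pb1 u v ∘ h) (pb2 u v ∘ h)) as [k [_ Hk]].
  { rewrite !cmp_assoc, Hc. reflexivity. }
  rewrite (Hk h eq_refl eq_refl), (Hk h' (eq_sym H1) (eq_sym H2)). reflexivity.
Qed.

Definition pb_pair {A B C X : E} (u : Hom A C) (v : Hom B C) (a : Hom X A) (b : Hom X B)
  (H : u ∘ a = v ∘ b) : Hom X (pb u v) :=
  proj1_sig (constructive_indefinite_description _
    (is_pullback_lift u v _ _ a b (pb_ok u v) H)).

Lemma pb_pair1 {A B C X : E} (u : Hom A C) (v : Hom B C) (a : Hom X A) (b : Hom X B) H :
  pb1 u v ∘ pb_pair u v a b H = a.
Proof. unfold pb_pair. destruct constructive_indefinite_description as [h [h1 h2]]. exact h1. Qed.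

Lemma pb_pair2 {A B C X : E} (u : Hom A C) (v : Hom B C) (a : Hom X A) (b : Hom X B) H :
  pb2 u v ∘ pb_pair u v a b H = b.
Proof. unfold pb_pair. destruct constructive_indefinite_description as [h [h1 h2]]. exact h2. Qed.

Lemma pb1_iso {A B C : E} (u : Hom A C) (v : Hom B C) : is_iso v -> is_iso (pb1 u v).
Proof.
  intros [v' [V1 V2]].
  assert (H : u ∘ idm A = v ∘ (v' ∘ u)) by (crw V2; auto).
  exists (pb_pair u v (idm A) (v' ∘ u) H). split; [apply pb_ext|apply pb_pair1].
  - crw (pb_pair1 u v _ _ H). auto.
  - crw (pb_pair2 u v _ _ H). crw (pb_comm u v). crw V1. auto.
Qed.

Lemma pb2_iso {A B C : E} (u : Hom A C) (v : Hom B C) : is_iso u -> is_iso (pb2 u v).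
Proof.
  intros [u' [U1 U2]].
  assert (H : u ∘ (u' ∘ v) = v ∘ idm B) by (crw U2; auto).
  exists (pb_pair u v (u' ∘ v) (idm B) H). split; [apply pb_ext|apply pb_pair2].
  - crw (pb_pair1 u v _ _ H). crw (eq_sym (pb_comm u v)). crw U1. auto.
  - crw (pb_pair2 u v _ _ H). auto.
Qed.

Lemma pb1_split_epi {A B C : E} (u : Hom A C) (v : Hom B C) :
  split_epi v -> split_epi (pb1 u v).
Proof.
  intros [s Hs]. assert (H : u ∘ idm A = v ∘ (s ∘ u)) by (crw Hs; auto).
  exists (pb_pair u v _ _ H). apply pb_pair1.
Qed.

Lemma pb2_split_epi {A B C : E} (u : Hom A C) (v : Hom B C) :
  split_epi u -> split_epi (pb2 u v).
Proof.
  intros [s Hs]. assert (H : u ∘ (s ∘ v) = v ∘ idm B) by (crw Hs; auto).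
  exists (pb_pair u v _ _ H). apply pb_pair2.
Qed.

Definition pb_swap {B F Y : E} (l : Hom F B) (y : Hom Y B) : Hom (pb y l) (pb l y) :=
  pb_pair l y _ _ (eq_sym (pb_comm y l)).

Lemma pb_swap1 {B F Y : E} (l : Hom F B) (y : Hom Y B) : pb1 l y ∘ pb_swap l y = pb2 y l.
Proof. apply pb_pair1. Qed.

Lemma pb_swap2 {B F Y : E} (l : Hom F B) (y : Hom Y B) : pb2 l y ∘ pb_swap l y = pb1 y l.
Proof. apply pb_pair2. Qed.

Lemma pb_swap_invol {B F Y : E} (l : Hom F B) (y : Hom Y B) :
  pb_swap l y ∘ pb_swap y l = idm _.
Proof.
  apply pb_ext; [crw (pb_swap1 l y); crw (pb_swap2 y l) | crw (pb_swap2 l y); crw (pb_swap1 y l)];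
    auto.
Qed.

Lemma pb_swap_iso {B F Y : E} (l : Hom F B) (y : Hom Y B) : is_iso (pb_swap l y).
Proof. exists (pb_swap y l). split; apply pb_swap_invol. Qed.

Lemma protocal_iso (M : morclass E) {A B : E} (f : Hom A B) : protocal M -> is_iso f -> M _ _ f.
Proof. intros H. apply H. Qed.

Lemma protocal_comp (M : morclass E) {A B C : E} (f : Hom A B) (g : Hom B C) :
  protocal M -> M _ _ f -> M _ _ g -> M _ _ (g ∘ f).
Proof. intros H. apply H. Qed.

Lemma protocal_comp_iso (M : morclass E) {A B C : E} (i : Hom A B) (f : Hom B C) :
  protocal M -> is_iso i -> M _ _ f -> M _ _ (f ∘ i).
Proof. intros H. apply H. Qed.

Lemma protocal_pb1 (M : morclass E) {A B C : E} (u : Hom A C) (v : Hom B C) :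
  protocal M -> M _ _ v -> M _ _ (pb1 u v).
Proof. intros H. apply (proj2 (proj2 (proj2 (proj2 H))) _ _ _ _ v u (pb2 u v)).
  apply is_pullback_sym, pb_ok. Qed.

Lemma protocal_pb2 (M : morclass E) {A B C : E} (u : Hom A C) (v : Hom B C) :
  protocal M -> M _ _ u -> M _ _ (pb2 u v).
Proof. intros H. apply (proj2 (proj2 (proj2 (proj2 H))) _ _ _ _ u v (pb1 u v)), pb_ok. Qed.

End Pullbacks.

Section Delta.
Context {E : PBCat} {U V : E} (u : Hom U V).

Lemma Delta_map_ex {Y Z : E} (y : Hom Y V) (z : Hom Z V) (h : Hom Z Y) :
  y ∘ h = z -> exists m, Delta_map u y z h m.
Proof.
  intros Hz. assert (H : u ∘ pb1 u z = y ∘ (h ∘ pb2 u z)) by (crw Hz; apply pb_comm).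
  exists (pb_pair _ _ _ _ H). split; [apply pb_pair1 | apply pb_pair2].
Qed.

Lemma Delta_map_uniq {Y Z : E} (y : Hom Y V) (z : Hom Z V) h m m' :
  Delta_map u y z h m -> Delta_map u y z h m' -> m = m'.
Proof. intros [H1 H2] [H1' H2']. apply pb_ext; congruence. Qed.

(* Maps into [Pi_u x] are determined by their transposes. *)
Lemma pi_value_ext {X Y Z : E} (x : Hom X U) (y : Hom Y V) eps (k1 k2 : Hom Z Y) m1 m2 :
  pi_value u x y eps -> y ∘ k2 = y ∘ k1 ->
  Delta_map u y (y ∘ k1) k1 m1 -> Delta_map u y (y ∘ k1) k2 m2 -> eps ∘ m1 = eps ∘ m2 ->
  k1 = k2.
Proof.
  intros [Hx Hu] Hk D1 D2 Heps.
  assert (Hg : x ∘ (eps ∘ m1) = pb1 u (y ∘ k1)) by (crw Hx; apply (proj1 D1)).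
  destruct (Hu Z (y ∘ k1) (eps ∘ m1) Hg) as [k [_ Huniq]].
  rewrite (Huniq k1), (Huniq k2); auto.
  - split; [exact Hk|]. intros m Dm. rewrite (Delta_map_uniq y _ k2 m m2 Dm D2). auto.
  - split; [auto|]. intros m Dm. rewrite (Delta_map_uniq y _ k1 m m1 Dm D1). auto.
Qed.

End Delta.

Section Spans.
Context {E : PBCat}.

Lemma icell_of_iso {U V : E} (s t : Span U V) f : cell s t f -> is_iso f -> icell s t f.
Proof.
  intros [C1 C2] [g [G1 G2]]. split; [split; auto|].
  exists g. split; [|split]; auto. split.
  - rewrite <- C1. crw G2. auto.
  - rewrite <- C2. crw G2. auto.
Qed.

Lemma icell_iso {U V : E} (s t : Span U V) f : icell s t f -> is_iso f.
Proof. intros [_ [g [_ [G1 G2]]]]. exists g. auto. Qed.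

Lemma icell_comp {U V : E} (s t u : Span U V) f f' :
  icell s t f -> icell t u f' -> icell s u (f ∘ f').
Proof.
  intros [[C1 C2] [g [[D1 D2] [G1 G2]]]] [[C1' C2'] [g' [[D1' D2'] [G1' G2']]]].
  split; [split; [crw C1 | crw C2]; auto|].
  exists (g' ∘ g). split; [split; [crw D1' | crw D2']; auto|].
  split; [crw G1' | crw G2]; auto.
Qed.

(* The inverse 2-cells exhibit [sl e ∘ pb1] and [sr e ∘ pb2] as isomorphisms and the legs of
   [e'] as split epis, which stay split epi after pulling back. *)
Lemma equiv_legs_iso {A B : E} (e : Span A B) (e' : Span B A) a b :
  icell (scomp e' e) (sid A) a -> icell (scomp e e') (sid B) b -> is_iso (sl e) /\ is_iso (sr e).
Proof.
  intros [_ [ga [[A1 A2] GA]]] [_ [gb [[B1 B2] GB]]].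
  simpl in *. rewrite cmp_idl in A1, A2. rewrite cmp_idl in B1, B2.
  assert (Iga : is_iso ga) by (exists a; tauto).
  assert (Igb : is_iso gb) by (exists b; tauto).
  split.
  - apply (iso_of_cmp_split_epi _ (pb1 (sr e) (sl e'))); [rewrite <- A1; exact Iga|].
    apply pb1_split_epi, (split_epi_of_cmp_iso _ (pb1 (sr e') (sl e))). rewrite <- B1. exact Igb.
  - apply (iso_of_cmp_split_epi _ (pb2 (sr e') (sl e))); [rewrite <- B2; exact Igb|].
    apply pb2_split_epi, (split_epi_of_cmp_iso _ (pb2 (sr e) (sl e'))). rewrite <- A2. exact Iga.
Qed.

Lemma whr_unique_of_iso_sl {U A C : E} (p : Span A C) (s t : Span U A) f f' g :
  is_iso (sl p) -> whr p s t f g -> whr p s t f' g -> f = f'.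
Proof.
  intros Is [W1 _] [W1' _]. apply (iso_epi (pb1 (sr t) (sl p))); [now apply pb1_iso|].
  now rewrite <- W1, <- W1'.
Qed.

(* Since [pb1 _ (sl p)] is invertible, [de] is [ga] read through these projections. *)
Lemma whr_opcartesian_of_iso_sl {U A C : E} (p : Span A C) (x z w : Span U A) ps ch ga mps mch :
  is_iso (sl p) -> cell x z ps -> cell x w ch -> cell (scomp p z) (scomp p w) ga ->
  whr p x z ps mps -> whr p x w ch mch -> mps ∘ ga = mch ->
  exists de, cell z w de /\ ps ∘ de = ch /\ whr p z w de ga.
Proof.
  intros Is [_ Cps2] [_ Cch2] [Cga1 _] [W1 _] [W3 _] W5. cbn [sl sr apex scomp] in *.
  destruct (pb1_iso (sr w) (sl p) Is) as [iw [IW1 IW2]].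
  set (de := pb1 (sr z) (sl p) ∘ ga ∘ iw).
  assert (D1 : de ∘ pb1 (sr w) (sl p) = pb1 (sr z) (sl p) ∘ ga) by (unfold de; crw IW1; auto).
  assert (D2 : ps ∘ de = ch).
  { unfold de. cat_norm. rewrite <- W1. crw W5. crw W3. crw IW2. auto. }
  assert (D3 : sr z ∘ de = sr w) by (rewrite <- Cps2, <- Cch2, <- D2; cat_norm; auto).
  exists de. split; [split|split; [exact D2|split; [exact (eq_sym D1)|]]].
  - unfold de. crw Cga1. crw IW2. auto.
  - exact D3.
  - apply (iso_mono (sl p)); auto.
    cat_norm. rewrite <- !pb_comm. crw (eq_sym D1). crw D3. apply pb_comm.
Qed.

(* The lift of [ph : p.x => b] keeps the left leg of [b] and reads its right leg through
   [pb2 (sr x) (sl p)]. *)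
Lemma lift_of_iso_sl (L : morclass E) {U A C : E} (p : Span A C) (x : Span U A) (b : Span U C)
  ph : is_iso (sl p) -> Lspan L b -> cell (scomp p x) b ph ->
  exists (z : Span U A) ps io mps,
    Lspan L z /\ cell x z ps /\ icell b (scomp p z) io /\ whr p x z ps mps /\ mps = ph ∘ io.
Proof.
  intros Is Lb [Cph1 Cph2]. cbn [sl sr apex scomp] in *.
  set (z := mkSpan (apex b) (sl b) (sl p ∘ pb2 (sr x) (sl p) ∘ ph) : Span U A).
  destruct (pb1_iso (sr z) (sl p) Is) as [iz [IZ1 IZ2]].
  assert (P2z : pb2 (sr z) (sl p) = pb2 (sr x) (sl p) ∘ ph ∘ pb1 (sr z) (sl p)).
  { apply (iso_mono (sl p)); auto. rewrite <- pb_comm. cbn [sl sr apex scomp]. cat_norm. auto. }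
  exists z, (pb1 (sr x) (sl p) ∘ ph), (pb1 (sr z) (sl p)), (ph ∘ pb1 (sr z) (sl p)).
  split; [exact Lb|split; [|split; [|split]]].
  - split; cbn [sl sr apex scomp]; cat_norm; auto. crw (pb_comm (sr x) (sl p)). auto.
  - apply icell_of_iso; [|exists iz; auto].
    split; cbn [sl sr apex scomp]; auto. rewrite <- Cph2, P2z. cat_norm. auto.
  - split; cbn [sl sr apex scomp]; cat_norm; auto.
  - auto.
Qed.

Lemma gopfib_of_iso_sl (L : morclass E) {A C : E} (p : Span A C) (U : E) :
  is_iso (sl p) -> gopfib L p U.
Proof.
  intros Is. split.
  - intros x z w ps ch ga _ _ _ Cps Cch Cga [mps [mch [Wps [Wch Hm]]]].
    destruct (whr_opcartesian_of_iso_sl p x z w ps ch ga mps mch Is Cps Cch Cga Wps Wch Hm)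
      as [de Hde].
    exists de. split; [exact Hde|].
    intros de' [_ [_ W']]. exact (whr_unique_of_iso_sl p z w de' de ga Is W' (proj2 (proj2 Hde))).
  - intros x b ph _ Lb Cph.
    exact (lift_of_iso_sl L p x b ph Is Lb Cph).
Qed.

Lemma whl_ex {X P C : E} (s t : Span P C) (h : Span X P) (f : Hom (apex t) (apex s)) :
  sl s ∘ f = sl t -> exists g, whl s t h f g.
Proof.
  intros H.
  assert (Hc : sr h ∘ pb1 (sr h) (sl t) = sl s ∘ (f ∘ pb2 (sr h) (sl t))).
  { rewrite cmp_assoc, H. apply pb_comm. }
  exists (pb_pair _ _ _ _ Hc). split; [apply pb_pair1 | apply pb_pair2].
Qed.

Lemma whl_uniq {X P C : E} (s t : Span P C) (h : Span X P) f g g' :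
  whl s t h f g -> whl s t h f g' -> g = g'.
Proof. intros [H1 H2] [H1' H2']. apply pb_ext; congruence. Qed.

Lemma whl_comp {X P C : E} (s t u : Span P C) (h : Span X P) f f' g g' :
  whl s t h f g -> whl t u h f' g' -> whl s u h (f ∘ f') (g ∘ g').
Proof. intros [H1 H2] [H1' H2']. split; [crw H1; crw H1' | crw H2; crw H2']; auto. Qed.

Lemma whl_id {X P C : E} (s : Span P C) (h : Span X P) : whl s s h (idm _) (idm _).
Proof. split; cat_norm; auto. Qed.

Lemma whr_ex {U A C : E} (p : Span A C) (s t : Span U A) (f : Hom (apex t) (apex s)) :
  sr s ∘ f = sr t -> exists g, whr p s t f g.
Proof.
  intros H.
  assert (Hc : sr s ∘ (f ∘ pb1 (sr t) (sl p)) = sl p ∘ pb2 (sr t) (sl p)).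
  { rewrite cmp_assoc, H. apply pb_comm. }
  exists (pb_pair _ _ _ _ Hc). split; [apply pb_pair1 | apply pb_pair2].
Qed.

Lemma whr_uniq {U A C : E} (p : Span A C) (s t : Span U A) f g g' :
  whr p s t f g -> whr p s t f g' -> g = g'.
Proof. intros [H1 H2] [H1' H2']. apply pb_ext; congruence. Qed.

Lemma whr_comp {U A C : E} (p : Span A C) (s t u : Span U A) f f' g g' :
  whr p s t f g -> whr p t u f' g' -> whr p s u (f ∘ f') (g ∘ g').
Proof. intros [H1 H2] [H1' H2']. split; [crw H1; crw H1' | crw H2; crw H2']; auto. Qed.

Lemma whr_id {U A C : E} (p : Span A C) (s : Span U A) : whr p s s (idm _) (idm _).
Proof. split; cat_norm; auto. Qed.

Lemma whr_inv {U A C : E} (p : Span A C) (s t : Span U A) f f' g g' :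
  whr p s t f g -> whr p t s f' g' -> f' ∘ f = idm _ -> g' ∘ g = idm _.
Proof.
  intros W W' Hf. pose proof (whr_comp p t s t f' f g' g W' W) as Wc. rewrite Hf in Wc.
  exact (whr_uniq p t t _ _ _ Wc (whr_id p t)).
Qed.

Lemma cell_whl {X P C : E} (s t : Span P C) (h : Span X P) f g :
  cell s t f -> whl s t h f g -> cell (scomp s h) (scomp t h) g.
Proof.
  intros [_ C2] [W1 W2]. split; cbn [sl sr scomp].
  - crw W1. auto.
  - crw W2. crw C2. auto.
Qed.

Lemma icell_whl {X P C : E} (s t : Span P C) (h : Span X P) f g :
  icell s t f -> whl s t h f g -> icell (scomp s h) (scomp t h) g.
Proof.
  intros [Cf [f' [Cf' [F1 F2]]]] W.
  destruct (whl_ex t s h f' (proj1 Cf')) as [g' W'].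
  split; [exact (cell_whl s t h f g Cf W)|].
  exists g'. split; [exact (cell_whl t s h f' g' Cf' W')|split].
  - pose proof (whl_comp s t s h f f' g g' W W') as Wc. rewrite F1 in Wc.
    exact (whl_uniq s s h _ _ _ Wc (whl_id s h)).
  - pose proof (whl_comp t s t h f' f g' g W' W) as Wc. rewrite F2 in Wc.
    exact (whl_uniq t t h _ _ _ Wc (whl_id t h)).
Qed.

(* The second component of the associator [sassoc]. *)
Definition scomp_proj {X' X B C : E} (f : Span B C) (b : Span X B) (e : Span X' X) :
  Hom (apex (scomp f (scomp b e))) (apex (scomp f b)) :=
  pb_pair (sr b) (sl f) (pb2 (sr e) (sl b) ∘ pb1 (sr (scomp b e)) (sl f))
    (pb2 (sr (scomp b e)) (sl f))
    (eq_trans (cmp_assoc _ _ _) (pb_comm (sr (scomp b e)) (sl f))).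

Lemma scomp_proj1 {X' X B C : E} (f : Span B C) (b : Span X B) (e : Span X' X) :
  pb1 (sr b) (sl f) ∘ scomp_proj f b e = pb2 (sr e) (sl b) ∘ pb1 (sr (scomp b e)) (sl f).
Proof. apply pb_pair1. Qed.

Lemma scomp_proj2 {X' X B C : E} (f : Span B C) (b : Span X B) (e : Span X' X) :
  pb2 (sr b) (sl f) ∘ scomp_proj f b e = pb2 (sr (scomp b e)) (sl f).
Proof. apply pb_pair2. Qed.

Lemma scomp_proj_whisker {X' X B C : E} (f : Span B C) (b b' : Span X B) (e : Span X' X)
  be be_e mb mb_e :
  whr f (scomp b e) (scomp b' e) be_e mb_e -> whl b b' e be be_e -> whr f b b' be mb ->
  scomp_proj f b e ∘ mb_e = mb ∘ scomp_proj f b' e.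
Proof.
  intros [R1 R2] [L1 L2] [S1 S2]. apply pb_ext.
  - crw (scomp_proj1 f b e). crw R1. crw L2. crw S1. crw (scomp_proj1 f b' e). auto.
  - crw (scomp_proj2 f b e). crw R2. crw S2. crw (scomp_proj2 f b' e). auto.
Qed.

Lemma sassoc_comm {A B C D : E} (x : Span C D) (y : Span B C) (z : Span A B) :
  sr z ∘ (pb1 (sr z) (sl y) ∘ pb1 (sr (scomp y z)) (sl x)) =
  sl (scomp x y) ∘ scomp_proj x y z.
Proof.
  change (sl (scomp x y)) with (sl y ∘ pb1 (sr y) (sl x)).
  crw (scomp_proj1 x y z). crw (pb_comm (sr z) (sl y)). auto.
Qed.

Definition sassoc {A B C D : E} (x : Span C D) (y : Span B C) (z : Span A B) :
  Hom (apex (scomp x (scomp y z))) (apex (scomp (scomp x y) z)) :=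
  pb_pair (sr z) (sl (scomp x y)) _ _ (sassoc_comm x y z).

Lemma sassoc1 {A B C D : E} (x : Span C D) (y : Span B C) (z : Span A B) :
  pb1 (sr z) (sl (scomp x y)) ∘ sassoc x y z = pb1 (sr z) (sl y) ∘ pb1 (sr (scomp y z)) (sl x).
Proof. apply pb_pair1. Qed.

Lemma sassoc2 {A B C D : E} (x : Span C D) (y : Span B C) (z : Span A B) :
  pb2 (sr z) (sl (scomp x y)) ∘ sassoc x y z = scomp_proj x y z.
Proof. apply pb_pair2. Qed.

Lemma sassoc_rel {A B C D : E} (x : Span C D) (y : Span B C) (z : Span A B) :
  assoc_rel x y z (sassoc x y z).
Proof.
  split; [apply sassoc1|rewrite sassoc2; split; [apply scomp_proj1 | apply scomp_proj2]].
Qed.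

Lemma assoc_rel_sassoc {A B C D : E} (x : Span C D) (y : Span B C) (z : Span A B) a :
  assoc_rel x y z a -> a = sassoc x y z.
Proof.
  intros [H1 [H2 H3]]. apply pb_ext.
  - rewrite H1, sassoc1. auto.
  - rewrite sassoc2. apply pb_ext; [rewrite H2, scomp_proj1 | rewrite H3, scomp_proj2]; auto.
Qed.

Lemma sassoc_iso {A B C D : E} (x : Span C D) (y : Span B C) (z : Span A B) :
  is_iso (sassoc x y z).
Proof.
  assert (H : sr z ∘ pb1 (sr z) (sl (scomp x y)) =
              sl y ∘ (pb1 (sr y) (sl x) ∘ pb2 (sr z) (sl (scomp x y)))).
  { rewrite cmp_assoc. exact (pb_comm (sr z) (sl (scomp x y))). }
  set (K := pb_pair _ _ _ _ H).
  assert (H' : sr (scomp y z) ∘ K = sl x ∘ (pb2 (sr y) (sl x) ∘ pb2 (sr z) (sl (scomp x y)))).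
  { change (sr (scomp y z)) with (sr y ∘ pb2 (sr z) (sl y)). unfold K.
    crw (pb_pair2 _ _ _ _ H). crw (pb_comm (sr y) (sl x)). auto. }
  exists (pb_pair _ _ _ _ H'). split.
  - apply pb_ext; [apply pb_ext|].
    + crw (pb_pair1 _ _ _ _ H'). unfold K. crw (pb_pair1 _ _ _ _ H). crw (sassoc1 x y z). auto.
    + crw (pb_pair1 _ _ _ _ H'). unfold K. crw (pb_pair2 _ _ _ _ H). crw (sassoc2 x y z).
      crw (scomp_proj1 x y z). auto.
    + crw (pb_pair2 _ _ _ _ H'). crw (sassoc2 x y z). crw (scomp_proj2 x y z). auto.
  - apply pb_ext; [|apply pb_ext].
    + crw (sassoc1 x y z). crw (pb_pair1 _ _ _ _ H'). unfold K. crw (pb_pair1 _ _ _ _ H). auto.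
    + crw (sassoc2 x y z). crw (scomp_proj1 x y z). crw (pb_pair1 _ _ _ _ H'). unfold K.
      crw (pb_pair2 _ _ _ _ H). auto.
    + crw (sassoc2 x y z). crw (scomp_proj2 x y z). crw (pb_pair2 _ _ _ _ H'). auto.
Qed.

Lemma sassoc_cell {A B C D : E} (x : Span C D) (y : Span B C) (z : Span A B) :
  cell (scomp (scomp x y) z) (scomp x (scomp y z)) (sassoc x y z).
Proof.
  split; cbn [sl sr scomp].
  - crw (sassoc1 x y z). auto.
  - crw (sassoc2 x y z). crw (scomp_proj2 x y z). auto.
Qed.

Lemma scomp_proj_sassoc {X'' X' X B C : E} (f : Span B C) (g : Span X B) (h : Span X' X)
  (e : Span X'' X') mb :
  whr f (scomp (scomp g h) e) (scomp g (scomp h e)) (sassoc g h e) mb ->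
  scomp_proj f g h ∘ scomp_proj f (scomp g h) e ∘ mb = scomp_proj f g (scomp h e).
Proof.
  intros [M1 M2]. apply pb_ext.
  - crw (scomp_proj1 f g h). crw (scomp_proj1 f (scomp g h) e). crw M1. crw (sassoc2 g h e).
    crw (scomp_proj2 g h e). crw (scomp_proj1 f g (scomp h e)). auto.
  - crw (scomp_proj2 f g h). crw (scomp_proj2 f (scomp g h) e). crw M2.
    crw (scomp_proj2 f g (scomp h e)). auto.
Qed.

Lemma cell_scomp_sid {P Z : E} (s : Span P Z) :
  cell s (scomp s (sid P)) (pb2 (sr (sid P)) (sl s)).
Proof. split; [symmetry; exact (pb_comm (idm P) _) | reflexivity]. Qed.

Definition span_of {Y B : E} (y : Hom Y B) : Span Y B := mkSpan Y (idm Y) y.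

Lemma scomp_span_of_pb2 {X Y B : E} (y : Hom Y B) (h : Span X Y) :
  pb2 (sr h) (sl (span_of y)) = sr h ∘ pb1 (sr h) (sl (span_of y)).
Proof. rewrite pb_comm. cbn [sl span_of]. cat_norm. auto. Qed.

Lemma scomp_span_of_unit {X Y B : E} (y : Hom Y B) (h : Span X Y) :
  exists k : Hom (apex h) (apex (scomp (span_of y) h)),
    pb1 (sr h) (sl (span_of y)) ∘ k = idm _ /\ pb2 (sr h) (sl (span_of y)) ∘ k = sr h /\
    k ∘ pb1 (sr h) (sl (span_of y)) = idm _.
Proof.
  destruct (pb1_iso (sr h) (sl (span_of y)) (iso_id Y)) as [k [K1 K2]].
  exists k. split; [exact K2|split; [|exact K1]].
  rewrite scomp_span_of_pb2. crw K2. auto.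
Qed.

End Spans.

Section IsoComma.
Context {E : PBCat} {A B C : E} (p : Span A C) (f : Span B C).

(* [phi_iso] with the associators eliminated: the three components of [j] through the
   iterated pullback [p.(a.e)]. *)
Definition phi_explicit {X X' : E} (a : Span X A) (b : Span X B)
  (io : Hom (apex (scomp f b)) (apex (scomp p a))) (e : Span X' X)
  (j : Hom (apex (scomp f (scomp b e))) (apex (scomp p (scomp a e)))) : Prop :=
  pb1 (sr e) (sl a) ∘ pb1 (sr (scomp a e)) (sl p) ∘ j
    = pb1 (sr e) (sl b) ∘ pb1 (sr (scomp b e)) (sl f) /\
  pb2 (sr e) (sl a) ∘ pb1 (sr (scomp a e)) (sl p) ∘ j
    = pb1 (sr a) (sl p) ∘ io ∘ scomp_proj f b e /\
  pb2 (sr (scomp a e)) (sl p) ∘ j = pb2 (sr a) (sl p) ∘ io ∘ scomp_proj f b e.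

Lemma phi_iso_explicit {X X' : E} (a : Span X A) (b : Span X B) io (e : Span X' X) j :
  phi_iso p f a b io e j -> phi_explicit a b io e j.
Proof.
  intros [a1 [a2 [m [R1 [R2 [[W1 W2] Heq]]]]]].
  apply assoc_rel_sassoc in R1, R2. subst a1 a2.
  pose proof (sassoc2 f b e) as K.
  split; [|split].
  - rewrite <- (sassoc1 p a e). crw Heq. crw W1. apply sassoc1.
  - rewrite <- (scomp_proj1 p a e), <- (sassoc2 p a e). crw Heq. crw W2. crw K. auto.
  - rewrite <- (scomp_proj2 p a e), <- (sassoc2 p a e). crw Heq. crw W2. crw K. auto.
Qed.

Lemma explicit_phi_iso {X X' : E} (a : Span X A) (b : Span X B) io (e : Span X' X) j :
  sl (scomp p a) ∘ io = sl (scomp f b) -> phi_explicit a b io e j -> phi_iso p f a b io e j.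
Proof.
  intros Hio [L1 [L2 L3]].
  destruct (whl_ex (scomp p a) (scomp f b) e io Hio) as [m [W1 W2]].
  exists (sassoc p a e), (sassoc f b e), m.
  split; [apply sassoc_rel|split; [apply sassoc_rel|split; [split; auto|]]].
  apply pb_ext.
  - crw (sassoc1 p a e). crw L1. crw W1. crw (sassoc1 f b e). auto.
  - cat_norm. crw (sassoc2 p a e). crw W2. crw (sassoc2 f b e). apply pb_ext.
    + crw (scomp_proj1 p a e). crw L2. auto.
    + crw (scomp_proj2 p a e). crw L3. auto.
Qed.

Lemma phi_explicit_sl {X X' : E} (a : Span X A) (b : Span X B) io (e : Span X' X) j :
  phi_explicit a b io e j -> sl (scomp p (scomp a e)) ∘ j = sl (scomp f (scomp b e)).
Proof. intros [L1 _]. cbn [sl scomp]. crw L1. auto. Qed.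

Lemma phi_explicit_ex {X X' : E} (a : Span X A) (b : Span X B) io (e : Span X' X) :
  sl (scomp p a) ∘ io = sl (scomp f b) -> exists j, phi_explicit a b io e j.
Proof.
  intros Hio. cbn [sl scomp] in Hio. cat_norm_in Hio.
  assert (H1 : sr e ∘ (pb1 (sr e) (sl b) ∘ pb1 (sr (scomp b e)) (sl f)) =
               sl a ∘ (pb1 (sr a) (sl p) ∘ io ∘ scomp_proj f b e)).
  { crw Hio. crw (scomp_proj1 f b e). crw (pb_comm (sr e) (sl b)). auto. }
  set (J1 := pb_pair _ _ _ _ H1).
  assert (H2 : sr (scomp a e) ∘ J1 = sl p ∘ (pb2 (sr a) (sl p) ∘ io ∘ scomp_proj f b e)).
  { cbn [sr scomp]. unfold J1. crw (pb_pair2 _ _ _ _ H1). crw (pb_comm (sr a) (sl p)). auto. }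
  exists (pb_pair _ _ _ _ H2). split; [|split].
  - crw (pb_pair1 _ _ _ _ H2). unfold J1. crw (pb_pair1 _ _ _ _ H1). auto.
  - crw (pb_pair1 _ _ _ _ H2). unfold J1. crw (pb_pair2 _ _ _ _ H1). auto.
  - crw (pb_pair2 _ _ _ _ H2). auto.
Qed.

Definition isocomma_iso {X : E} (a : Span X A) (b : Span X B)
  (io : Hom (apex (scomp f b)) (apex (scomp p a))) (a' : Span X A) (b' : Span X B)
  (io' : Hom (apex (scomp f b')) (apex (scomp p a'))) : Prop :=
  exists al be, icell a a' al /\ icell b b' be /\ compat p f a b io a' b' io' al be.

Lemma compat_inv {X : E} (a : Span X A) (b : Span X B) io a' b' io' al be al' be' :
  compat p f a b io a' b' io' al be -> sr a' ∘ al' = sr a -> sr b' ∘ be' = sr b ->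
  al ∘ al' = idm _ -> al' ∘ al = idm _ -> be ∘ be' = idm _ -> be' ∘ be = idm _ ->
  compat p f a' b' io' a b io al' be'.
Proof.
  intros [ma [mb [Wa [Wb Hc]]]] Ha Hb A1 A2 B1 B2.
  destruct (whr_ex p a' a al' Ha) as [ma' Wa'].
  destruct (whr_ex f b' b be' Hb) as [mb' Wb'].
  exists ma', mb'. split; [|split]; auto.
  assert (M1 : ma' ∘ ma = idm _) by exact (whr_inv p a a' al al' ma ma' Wa Wa' A2).
  assert (M2 : mb ∘ mb' = idm _) by exact (whr_inv f b' b be' be mb' mb Wb' Wb B1).
  rewrite <- (cmp_idl (io' ∘ mb')), <- M1. rewrite <- cmp_assoc, (cmp_assoc ma io' mb').
  rewrite <- Hc. crw M2. auto.
Qed.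

Lemma isocomma_iso_sym {X : E} (a : Span X A) (b : Span X B) io a' b' io' :
  isocomma_iso a b io a' b' io' -> isocomma_iso a' b' io' a b io.
Proof.
  intros [al [be [[Ca [al' [Ca' [A1 A2]]]] [[Cb [be' [Cb' [B1 B2]]]] Hc]]]].
  exists al', be'. split; [|split].
  - split; auto. exists al. auto.
  - split; auto. exists be. auto.
  - exact (compat_inv a b io a' b' io' al be al' be' Hc (proj2 Ca') (proj2 Cb') A1 A2 B1 B2).
Qed.

Lemma isocomma_iso_trans {X : E} (a : Span X A) (b : Span X B) io a' b' io' a'' b'' io'' :
  isocomma_iso a b io a' b' io' -> isocomma_iso a' b' io' a'' b'' io'' ->
  isocomma_iso a b io a'' b'' io''.
Proof.
  intros [al [be [Ia [Ib [ma [mb [Wa [Wb Hc]]]]]]]]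
         [al' [be' [Ia' [Ib' [ma' [mb' [Wa' [Wb' Hc']]]]]]]].
  exists (al ∘ al'), (be ∘ be'). split; [|split]; [eapply icell_comp; eauto ..|].
  exists (ma ∘ ma'), (mb ∘ mb'). split; [|split]; [eapply whr_comp; eauto ..|].
  crw Hc. crw Hc'. auto.
Qed.

Lemma isocomma_iso_whisker {X X' : E} (a : Span X A) (b : Span X B) io a' b' io'
  (e : Span X' X) j j' :
  isocomma_iso a b io a' b' io' -> phi_explicit a b io e j -> phi_explicit a' b' io' e j' ->
  isocomma_iso (scomp a e) (scomp b e) j (scomp a' e) (scomp b' e) j'.
Proof.
  intros [al [be [Ia [Ib [ma [mb [[Wa1 Wa2] [Wb Hc]]]]]]]] [L1 [L2 L3]] [L1' [L2' L3']].
  destruct (whl_ex a a' e al (proj1 (proj1 Ia))) as [al_e Wal].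
  destruct (whl_ex b b' e be (proj1 (proj1 Ib))) as [be_e Wbe].
  assert (Iae := icell_whl _ _ _ _ _ Ia Wal).
  assert (Ibe := icell_whl _ _ _ _ _ Ib Wbe).
  destruct (whr_ex p _ _ al_e (proj2 (proj1 Iae))) as [ma_e [Ma1 Ma2]].
  destruct (whr_ex f _ _ be_e (proj2 (proj1 Ibe))) as [mb_e Wbe2].
  pose proof (scomp_proj_whisker f b b' e be be_e mb mb_e Wbe2 Wbe Wb) as HJ.
  destruct Wbe2 as [Mb1 Mb2], Wal as [Al1 Al2], Wbe as [Be1 Be2].
  exists al_e, be_e. split; [|split]; auto.
  exists ma_e, mb_e. split; [split|split; [split|]]; auto.
  apply pb_ext; [apply pb_ext|].
  - crw L1. crw Mb1. crw Be1. crw Ma1. crw Al1. crw L1'. auto.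
  - crw L2. crw HJ. crw Hc. crw Ma1. crw Al2. crw L2'. crw Wa1. auto.
  - crw L3. crw HJ. crw Hc. crw Ma2. crw L3'. crw Wa2. auto.
Qed.

Lemma isocomma_iso_assoc {P X X' : E} (q : Span P A) (g : Span P B) th (h : Span X P)
  (e : Span X' X) i j k :
  phi_explicit q g th h i -> phi_explicit (scomp q h) (scomp g h) i e j ->
  phi_explicit q g th (scomp h e) k ->
  isocomma_iso (scomp (scomp q h) e) (scomp (scomp g h) e) j
               (scomp q (scomp h e)) (scomp g (scomp h e)) k.
Proof.
  intros [Li1 [Li2 Li3]] [Lj1 [Lj2 Lj3]] [Lk1 [Lk2 Lk3]].
  assert (Ia := icell_of_iso _ _ _ (sassoc_cell q h e) (sassoc_iso q h e)).
  assert (Ib := icell_of_iso _ _ _ (sassoc_cell g h e) (sassoc_iso g h e)).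
  destruct (whr_ex p _ _ _ (proj2 (proj1 Ia))) as [ma [Ma1 Ma2]].
  destruct (whr_ex f _ _ _ (proj2 (proj1 Ib))) as [mb Wmb].
  pose proof (scomp_proj_sassoc f g h e mb Wmb) as HJ. destruct Wmb as [Mb1 Mb2].
  exists (sassoc q h e), (sassoc g h e). split; [|split]; auto.
  exists ma, mb. split; [split|split; [split|]]; auto.
  apply pb_ext; [apply pb_ext; [|apply pb_ext]|].
  - crw Lj1. crw Mb1. crw (sassoc1 g h e). crw Ma1. crw (sassoc1 q h e). crw Lk1. auto.
  - crw Lj2. crw Li1. crw (scomp_proj1 f (scomp g h) e). crw Mb1. crw (sassoc2 g h e).
    crw (scomp_proj1 g h e). crw Ma1. crw (sassoc2 q h e). crw (scomp_proj1 q h e). crw Lk1. auto.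
  - crw Lj2. crw Li2. crw HJ. crw Ma1. crw (sassoc2 q h e). crw (scomp_proj2 q h e). crw Lk2. auto.
  - crw Lj3. crw Li3. crw HJ. crw Ma2. crw Lk3. auto.
Qed.

Lemma isocomma_iso_unit {P : E} (q : Span P A) (g : Span P B) th i :
  phi_explicit q g th (sid P) i -> isocomma_iso q g th (scomp q (sid P)) (scomp g (sid P)) i.
Proof.
  intros [L1 [L2 L3]].
  pose proof (cell_scomp_sid q) as Cq. pose proof (cell_scomp_sid g) as Cg.
  destruct (whr_ex p _ _ _ (proj2 Cq)) as [ma [Ma1 Ma2]].
  destruct (whr_ex f _ _ _ (proj2 Cg)) as [mb [Mb1 Mb2]].
  assert (HJ : mb = scomp_proj f g (sid P)).
  { apply pb_ext; [crw Mb1; crw (scomp_proj1 f g (sid P)) | crw Mb2; crw (scomp_proj2 f g (sid P))];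
      auto. }
  exists (pb2 (sr (sid P)) (sl q)), (pb2 (sr (sid P)) (sl g)).
  split; [|split]; [apply icell_of_iso; [auto|apply pb2_iso, iso_id] ..|].
  exists ma, mb. split; [split|split; [split|]]; auto.
  subst mb. apply pb_ext; [crw Ma1; crw L2 | crw Ma2; crw L3]; auto.
Qed.

End IsoComma.

(* The candidate bicategorical pullback of [p] along [f]: its apex is [Y = Pi_(sl f)] of the
   pullback of [sr p] along [sr f], [g] is [y] viewed as a span, and [q] is read off the
   counit [eps]. *)
Section CanonicalPullback.
Context {E : PBCat} {A B C Y : E} (p : Span A C) (f : Span B C) (y : Hom Y B)
  (eps : Hom (pb (sl f) y) (pb (sr p) (sr f))).

Definition canon_q : Span Y A :=
  mkSpan (pb (sl f) y) (pb2 (sl f) y) (sl p ∘ pb1 (sr p) (sr f) ∘ eps).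

Definition canon_th : Hom (apex (scomp f (span_of y))) (apex (scomp p canon_q)) :=
  pb_pair (sr canon_q) (sl p) (pb_swap (sl f) y) (pb1 (sr p) (sr f) ∘ eps ∘ pb_swap (sl f) y)
    ltac:(cbn [sr canon_q]; cat_norm; reflexivity).

Lemma canon_th1 : pb1 (sr canon_q) (sl p) ∘ canon_th = pb_swap (sl f) y.
Proof. apply pb_pair1. Qed.

Lemma canon_th2 :
  pb2 (sr canon_q) (sl p) ∘ canon_th = pb1 (sr p) (sr f) ∘ eps ∘ pb_swap (sl f) y.
Proof. apply pb_pair2. Qed.

Hypothesis Is : is_iso (sl p).
Hypothesis Hpi : pi_value (sl f) (pb2 (sr p) (sr f)) y eps.
Local Notation q := canon_q.
Local Notation g := (span_of y).
Local Notation th := canon_th.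

Lemma canon_th_icell : icell (scomp p q) (scomp f g) th.
Proof.
  apply icell_of_iso.
  - split; cbn [sl sr scomp canon_q span_of].
    + crw canon_th1. crw (pb_swap2 (sl f) y). auto.
    + crw canon_th2. crw (pb_comm (sr p) (sr f)). crw (proj1 Hpi). crw (pb_swap1 (sl f) y). auto.
  - apply (iso_cancel_l (pb1 (sr q) (sl p))); [now apply pb1_iso|].
    rewrite canon_th1. apply pb_swap_iso.
Qed.

(* [sig], built from [inv'], is a section of [pb1 ∘ i' : f.(g.h') -> q.h']; by compatibility
   [al = pb1 ∘ i ∘ mb ∘ sig], whose components are read off [phi_explicit]. *)
Lemma canon_compat_components {X : E} (h h' : Span X Y) i i' al be inv' :
  phi_explicit p f q g th h i -> phi_explicit p f q g th h' i' ->
  compat p f (scomp q h) (scomp g h) i (scomp q h') (scomp g h') i' al be ->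
  pb1 (sr h') (sl g) ∘ inv' = idm _ -> pb2 (sr h') (sl g) ∘ inv' = sr h' ->
  pb1 (sr h) (sl q) ∘ al = pb1 (sr h) (sl g) ∘ be ∘ inv' ∘ pb1 (sr h') (sl q) /\
  pb1 (sl f) y ∘ pb2 (sr h) (sl q) ∘ al = pb1 (sl f) y ∘ pb2 (sr h') (sl q) /\
  pb2 (sl f) y ∘ pb2 (sr h) (sl q) ∘ al =
    sr h ∘ pb1 (sr h) (sl g) ∘ be ∘ inv' ∘ pb1 (sr h') (sl q).
Proof.
  intros [Li1 [Li2 _]] [Li1' [Li2' _]] [ma [mb [[Ma1 _] [[Mb1 Mb2] Hc]]]] I1 I2.
  assert (Hs : sr (scomp g h') ∘ (inv' ∘ pb1 (sr h') (sl q)) =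
               sl f ∘ (pb1 (sl f) y ∘ pb2 (sr h') (sl q))).
  { cbn [sr scomp span_of]. crw I2. crw (pb_comm (sr h') (sl q)). cbn [sl canon_q].
    crw (eq_sym (pb_comm (sl f) y)). auto. }
  destruct (is_pullback_lift _ _ _ _ _ _ (pb_ok (sr (scomp g h')) (sl f)) Hs) as [sig [S1 S2]].
  assert (Hsig : pb1 (sr (scomp q h')) (sl p) ∘ i' ∘ sig = idm _).
  { apply pb_ext.
    - crw Li1'. crw S1. crw I1. auto.
    - crw Li2'. crw canon_th1. apply pb_ext.
      + crw (pb_swap1 (sl f) y). crw (scomp_proj2 f g h'). crw S2. auto.
      + crw (pb_swap2 (sl f) y). crw (scomp_proj1 f g h'). crw S1. crw I2.
        crw (pb_comm (sr h') (sl q)). auto. }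
  assert (Hal : al = pb1 (sr (scomp q h)) (sl p) ∘ i ∘ mb ∘ sig).
  { transitivity (al ∘ (pb1 (sr (scomp q h')) (sl p) ∘ i' ∘ sig));
      [rewrite Hsig; cat_norm; auto|].
    crw (eq_sym Ma1). crw (eq_sym Hc). auto. }
  rewrite Hal. split; [|split].
  - crw Li1. crw Mb1. crw S1. auto.
  - crw Li2. crw canon_th1. crw (pb_swap1 (sl f) y). crw (scomp_proj2 f g h).
    crw Mb2. crw S2. auto.
  - crw Li2. crw canon_th1. crw (pb_swap2 (sl f) y). crw (scomp_proj1 f g h).
    crw Mb1. crw S1. crw (scomp_span_of_pb2 y h). auto.
Qed.

Lemma canon_eps_whisker {X : E} (h h' : Span X Y) al :
  cell (scomp q h) (scomp q h') al ->
  pb1 (sl f) y ∘ pb2 (sr h) (sl q) ∘ al = pb1 (sl f) y ∘ pb2 (sr h') (sl q) ->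
  eps ∘ pb2 (sr h) (sl q) ∘ al = eps ∘ pb2 (sr h') (sl q).
Proof.
  intros [_ Ca2] K. cbn [sr scomp canon_q] in Ca2. cat_norm_in Ca2. apply pb_ext.
  - apply (iso_mono (sl p)); [exact Is|]. cat_norm. exact Ca2.
  - crw (proj1 Hpi). exact K.
Qed.

(* Both sides lie over [y ∘ sr h'] and have the same transpose, by [canon_eps_whisker]. *)
Lemma canon_sr_whisker {X : E} (h h' : Span X Y) al be inv' :
  cell (scomp q h) (scomp q h') al -> cell (scomp g h) (scomp g h') be ->
  pb2 (sr h') (sl g) ∘ inv' = sr h' ->
  pb1 (sl f) y ∘ pb2 (sr h) (sl q) ∘ al = pb1 (sl f) y ∘ pb2 (sr h') (sl q) ->
  pb2 (sl f) y ∘ pb2 (sr h) (sl q) ∘ al =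
    sr h ∘ pb1 (sr h) (sl g) ∘ be ∘ inv' ∘ pb1 (sr h') (sl q) ->
  sr h ∘ pb1 (sr h) (sl g) ∘ be ∘ inv' = sr h'.
Proof.
  intros Ca [_ Cb2] I2 K1 K2. cbn [sr scomp span_of] in Cb2. cat_norm_in Cb2.
  rewrite (scomp_span_of_pb2 y h) in Cb2. cat_norm_in Cb2.
  set (z := y ∘ sr h').
  destruct (Delta_map_ex (sl f) y z (sr h') eq_refl) as [m0 [M1 M2]].
  assert (Ht : sr h' ∘ pb2 (sl f) z = sl q ∘ m0) by exact (eq_sym M2).
  set (tau := pb_pair _ _ _ _ Ht).
  assert (T1 : pb1 (sr h') (sl q) ∘ tau = pb2 (sl f) z) by apply pb_pair1.
  assert (T2 : pb2 (sr h') (sl q) ∘ tau = m0) by apply pb_pair2.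
  symmetry. apply (pi_value_ext (sl f) _ y eps _ _ m0 (pb2 (sr h) (sl q) ∘ al ∘ tau) Hpi).
  - crw Cb2. crw I2. auto.
  - split; auto.
  - split.
    + crw K1. crw T2. exact M1.
    + crw K2. crw T1. auto.
  - rewrite <- T2. crw (canon_eps_whisker h h' al Ca K1). auto.
Qed.

(* The 2-cell [h => h'] is [be] transported along the isomorphisms [pb1 : g.h -> h]. *)
Lemma canon_fully_faithful {X : E} (h h' : Span X Y) i i' al be :
  phi_iso p f q g th h i -> phi_iso p f q g th h' i' ->
  cell (scomp q h) (scomp q h') al -> cell (scomp g h) (scomp g h') be ->
  compat p f (scomp q h) (scomp g h) i (scomp q h') (scomp g h') i' al be ->
  exists ga : Hom (apex h') (apex h),
    (cell h h' ga /\ whr q h h' ga al /\ whr g h h' ga be) /\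
    forall ga', (cell h h' ga' /\ whr q h h' ga' al /\ whr g h h' ga' be) -> ga' = ga.
Proof.
  intros Pi Pi' Ca Cb Hc.
  destruct (scomp_span_of_unit y h') as [inv' [I1 [I2 I3]]].
  destruct (canon_compat_components h h' i i' al be inv' (phi_iso_explicit _ _ _ _ _ _ _ Pi)
              (phi_iso_explicit _ _ _ _ _ _ _ Pi') Hc I1 I2) as [K1 [K2 K3]].
  pose proof (canon_sr_whisker h h' al be inv' Ca Cb I2 K2 K3) as Hsr.
  pose proof (scomp_span_of_pb2 y h) as G. pose proof (scomp_span_of_pb2 y h') as G'.
  destruct Cb as [Cb1 _]. cbn [sl scomp span_of] in Cb1. cat_norm_in Cb1.
  exists (pb1 (sr h) (sl g) ∘ be ∘ inv'). split; [split; [|split]|].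
  - split; [crw Cb1; crw I1 | cat_norm; exact Hsr]; auto.
  - split; [crw K1; auto|]. apply pb_ext.
    + crw K2. auto.
    + crw K3. crw Hsr. crw (pb_comm (sr h') (sl q)). auto.
  - split.
    + crw I3. auto.
    + crw G. transitivity (sr h ∘ pb1 (sr h) (sl g) ∘ be ∘ inv' ∘ pb1 (sr h') (sl g));
        [crw I3 | crw Hsr; crw (eq_sym G')]; auto.
  - intros ga' [_ [_ [W1 _]]].
    transitivity (ga' ∘ pb1 (sr h') (sl g) ∘ inv'); [crw I1 | crw (eq_sym W1)]; auto.
Qed.

(* [k] is the transpose of the composite of [pb2 ∘ io] with the swap of [pb (sl f) (sr b)]. *)
Lemma canon_transpose {X : E} (a : Span X A) (b : Span X B) io :
  cell (scomp p a) (scomp f b) io ->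
  exists k mD, y ∘ k = sr b /\ Delta_map (sl f) y (sr b) k mD /\
    pb1 (sr p) (sr f) ∘ eps ∘ mD = pb2 (sr a) (sl p) ∘ io ∘ pb_swap (sr b) (sl f).
Proof.
  intros [_ Cio2]. cbn [sr scomp] in Cio2. cat_norm_in Cio2.
  assert (Hg : sr p ∘ (pb2 (sr a) (sl p) ∘ io ∘ pb_swap (sr b) (sl f)) =
               sr f ∘ pb1 (sl f) (sr b)).
  { crw Cio2. crw (pb_swap2 (sr b) (sl f)). auto. }
  destruct (is_pullback_lift _ _ _ _ _ _ (pb_ok (sr p) (sr f)) Hg) as [gm [GM1 GM2]].
  destruct (proj2 Hpi (apex b) (sr b) gm GM2) as [k [[Hy Hm] _]].
  destruct (Delta_map_ex (sl f) y (sr b) k Hy) as [mD D].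
  exists k, mD. split; [exact Hy|split; [exact D|]].
  rewrite <- GM1, <- (Hm mD D). cat_norm. auto.
Qed.

Lemma canon_lift_cell_q {X : E} (a : Span X A) (b : Span X B) io k mD :
  icell (scomp p a) (scomp f b) io -> y ∘ k = sr b -> Delta_map (sl f) y (sr b) k mD ->
  pb1 (sr p) (sr f) ∘ eps ∘ mD = pb2 (sr a) (sl p) ∘ io ∘ pb_swap (sr b) (sl f) ->
  exists al, icell (scomp q (mkSpan (apex b) (sl b) k)) a al /\
    pb1 k (sl q) ∘ al ∘ pb1 (sr a) (sl p) ∘ io = pb1 (sr b) (sl f) /\
    pb2 k (sl q) ∘ al ∘ pb1 (sr a) (sl p) ∘ io = mD ∘ pb_swap (sl f) (sr b).
Proof.
  intros [[Ci1 _] [ioi [[Cioi1 _] [IO1 IO2]]]] Hy [MD1 MD2] EG.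
  cbn [sl scomp] in Ci1, Cioi1. cat_norm_in Ci1. cat_norm_in Cioi1.
  destruct (pb1_iso (sr a) (sl p) Is) as [ja [JA1 JA2]].
  assert (nid : ioi ∘ ja ∘ pb1 (sr a) (sl p) ∘ io = idm _) by (crw JA1; crw IO2; auto).
  assert (Hal : k ∘ (pb1 (sr b) (sl f) ∘ ioi ∘ ja) =
                sl q ∘ (mD ∘ pb_swap (sl f) (sr b) ∘ ioi ∘ ja)).
  { cbn [sl canon_q]. crw MD2. crw (pb_swap2 (sl f) (sr b)). auto. }
  set (al := pb_pair _ _ _ _ Hal).
  assert (AL1 : pb1 k (sl q) ∘ al = pb1 (sr b) (sl f) ∘ ioi ∘ ja)
    by (cat_norm; apply pb_pair1).
  assert (AL2 : pb2 k (sl q) ∘ al = mD ∘ pb_swap (sl f) (sr b) ∘ ioi ∘ ja)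
    by (cat_norm; apply pb_pair2).
  assert (Hrh : sr b ∘ pb1 k (sl q) = sl f ∘ (pb1 (sl f) y ∘ pb2 k (sl q))).
  { rewrite <- Hy. crw (pb_comm k (sl q)). cbn [sl canon_q]. crw (eq_sym (pb_comm (sl f) y)).
    auto. }
  set (rho := pb_pair _ _ _ _ Hrh).
  assert (RH1 : pb1 (sr b) (sl f) ∘ rho = pb1 k (sl q)) by apply pb_pair1.
  assert (RH2 : pb2 (sr b) (sl f) ∘ rho = pb1 (sl f) y ∘ pb2 k (sl q)) by apply pb_pair2.
  exists al. split; [|split; [crw AL1; crw nid | crw AL2; crw nid]; auto].
  apply icell_of_iso.
  - split; cbn [sl sr scomp canon_q].
    + crw AL1. crw Cioi1. crw JA2. auto.
    + crw AL2. crw EG. crw (pb_swap_invol (sr b) (sl f)). crw IO1.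
      crw (eq_sym (pb_comm (sr a) (sl p))). crw JA2. auto.
  - exists (pb1 (sr a) (sl p) ∘ io ∘ rho). split.
    + assert (K : rho ∘ al = ioi ∘ ja).
      { apply pb_ext; [crw RH1; crw AL1 | crw RH2; crw AL2; crw MD1; crw (pb_swap1 (sl f) (sr b))];
          auto. }
      crw K. crw IO1. crw JA2. auto.
    + apply pb_ext; [crw AL1; crw nid; crw RH1; auto|]. crw AL2. crw nid. apply pb_ext.
      * crw MD1. crw (pb_swap1 (sl f) (sr b)). crw RH2. auto.
      * crw MD2. crw (pb_swap2 (sl f) (sr b)). crw RH1. crw (pb_comm k (sl q)). auto.
Qed.

Lemma canon_essentially_surjective (L : morclass E) {X : E} (a : Span X A) (b : Span X B) io :
  Lspan L b -> icell (scomp p a) (scomp f b) io ->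
  exists (h : Span X Y) (i : Hom (apex (scomp f (scomp g h))) (apex (scomp p (scomp q h))))
         (al : Hom (apex a) (apex (scomp q h))) (be : Hom (apex b) (apex (scomp g h))),
    Lspan L h /\ phi_iso p f q g th h i /\
    icell (scomp q h) a al /\ icell (scomp g h) b be /\
    compat p f (scomp q h) (scomp g h) i a b io al be.
Proof.
  intros Lb Iio.
  destruct (canon_transpose a b io (proj1 Iio)) as [k [mD [Hy [[MD1 MD2] EG]]]].
  set (h := mkSpan (apex b) (sl b) k).
  pose proof (proj1 (proj1 canon_th_icell)) as Hth.
  destruct (phi_explicit_ex p f q g th h Hth) as [i [Li1 [Li2 Li3]]].
  destruct (canon_lift_cell_q a b io k mD Iio Hy (conj MD1 MD2) EG) as [al [Ial [AL1 AL2]]].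
  destruct (scomp_span_of_unit y h) as [be [B1 [B2 B3]]].
  assert (Cbe : cell (scomp g h) b be).
  { split; cbn [sl sr scomp span_of]; [crw B1 | crw B2; exact Hy]; auto. }
  destruct (whr_ex p (scomp q h) a al (proj2 (proj1 Ial))) as [ma [Ma1 Ma2]].
  destruct (whr_ex f (scomp g h) b be (proj2 Cbe)) as [mb [Mb1 Mb2]].
  assert (KD : pb_swap (sl f) y ∘ scomp_proj f g h ∘ mb = mD ∘ pb_swap (sl f) (sr b)).
  { unfold h in *. apply pb_ext.
    - crw (pb_swap1 (sl f) y). crw (scomp_proj2 f g (mkSpan (apex b) (sl b) k)). crw Mb2. crw MD1.
      crw (pb_swap1 (sl f) (sr b)). auto.
    - crw (pb_swap2 (sl f) y). crw (scomp_proj1 f g (mkSpan (apex b) (sl b) k)). crw Mb1.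
      crw B2. crw MD2. crw (pb_swap2 (sl f) (sr b)). auto. }
  exists h, i, al, be. split; [exact Lb|split; [|split; [exact Ial|split]]].
  - apply explicit_phi_iso; [exact Hth | split; auto].
  - apply icell_of_iso; [exact Cbe|]. exists (pb1 (sr h) (sl g)). auto.
  - exists ma, mb. split; [split; auto|split; [split; auto|]].
    unfold h in *. apply pb_ext; [apply pb_ext|].
    + crw Li1. crw Mb1. crw B1. crw Ma1. crw AL1. auto.
    + crw Li2. crw canon_th1. crw KD. crw Ma1. crw AL2. auto.
    + crw Li3. crw canon_th2. crw KD. crw EG. crw (pb_swap_invol (sr b) (sl f)).
      crw Ma2. auto.
Qed.

Lemma canon_is_bipb (L : morclass E) :
  protocal L -> L _ _ (sl f) -> is_bipb L p f q g th.
Proof.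
  intros HL Lf. split; [|split; [|split]].
  - exact (protocal_pb2 L (sl f) y HL Lf).
  - exact (protocal_iso L (idm Y) HL (iso_id Y)).
  - exact canon_th_icell.
  - intros X. split.
    + intros h h' i i' al be _ _. exact (canon_fully_faithful h h' i i' al be).
    + intros a b io _. exact (canon_essentially_surjective L a b io).
Qed.

End CanonicalPullback.

Section BicategoricalPullbacks.
Context {E : PBCat} (L : morclass E) {A B C : E} (p : Span A C) (f : Span B C).

Lemma bipb_endo_cell_id {P X : E} (q : Span P A) (g : Span P B) th (k : Span X P) i x :
  is_bipb L p f q g th -> Lspan L k -> phi_iso p f q g th k i ->
  cell k k x -> whr q k k x (idm _) -> whr g k k x (idm _) -> x = idm _.
Proof.
  intros [_ [_ [_ Hbp]]] Lk Pk Cx Qx Gx.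
  assert (Cid : forall (Y Z : E) (s : Span Y Z), cell s s (idm _)) by (split; apply cmp_idr).
  assert (Hcid : compat p f (scomp q k) (scomp g k) i (scomp q k) (scomp g k) i (idm _) (idm _)).
  { exists (idm _), (idm _). split; [apply whr_id|split; [apply whr_id|]]. cat_norm. auto. }
  destruct (proj1 (Hbp X) k k i i _ _ Lk Lk Pk Pk (Cid _ _ _) (Cid _ _ _) Hcid) as [z [_ Hz]].
  rewrite (Hz x), (Hz (idm _)); auto.
  split; [apply Cid|split; apply whr_id].
Qed.

(* [Phi_X] is fully faithful, hence reflects isomorphisms. *)
Lemma bipb_reflects_iso {P X : E} (q : Span P A) (g : Span P B) th (h h' : Span X P) i i' :
  is_bipb L p f q g th -> Lspan L h -> Lspan L h' ->
  phi_iso p f q g th h i -> phi_iso p f q g th h' i' ->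
  isocomma_iso p f (scomp q h) (scomp g h) i (scomp q h') (scomp g h') i' ->
  exists ga, icell h h' ga.
Proof.
  intros Hb Lh Lh' Pi Pi' [al [be [[Ca [al' [Ca' [A1 A2]]]] [[Cb [be' [Cb' [B1 B2]]]] Hc]]]].
  pose proof (compat_inv p f _ _ i _ _ i' al be al' be' Hc (proj2 Ca') (proj2 Cb') A1 A2 B1 B2)
    as Hc'.
  pose proof Hb as [_ [_ [_ Hbp]]].
  destruct (proj1 (Hbp X) h h' i i' al be Lh Lh' Pi Pi' Ca Cb Hc)
    as [ga [[[C1 C2] [Wq Wg]] _]].
  destruct (proj1 (Hbp X) h' h i' i al' be' Lh' Lh Pi' Pi Ca' Cb' Hc')
    as [ga' [[[C1' C2'] [Wq' Wg']] _]].
  pose proof (whr_comp q h h' h ga ga' al al' Wq Wq') as Wq1. rewrite A1 in Wq1.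
  pose proof (whr_comp g h h' h ga ga' be be' Wg Wg') as Wg1. rewrite B1 in Wg1.
  pose proof (whr_comp q h' h h' ga' ga al' al Wq' Wq) as Wq2. rewrite A2 in Wq2.
  pose proof (whr_comp g h' h h' ga' ga be' be Wg' Wg) as Wg2. rewrite B2 in Wg2.
  exists ga. apply icell_of_iso; [split; auto|]. exists ga'. split.
  - apply (bipb_endo_cell_id q g th h' i'); auto. split; [crw C1' | crw C2']; auto.
  - apply (bipb_endo_cell_id q g th h i); auto. split; [crw C1 | crw C2]; auto.
Qed.

Lemma Lspan_scomp {U V W : E} (s : Span U V) (t : Span V W) :
  protocal L -> Lspan L s -> Lspan L t -> Lspan L (scomp t s).
Proof. intros HL Ls Lt. apply (protocal_comp L); [exact HL|apply (protocal_pb1 L)|]; auto. Qed.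

(* Through the associator, the two comparisons and the unitor, [Phi (h.k)] is isomorphic to
   [Phi (id)]; as [Phi] reflects isomorphisms, [h.k] is isomorphic to the identity. *)
Lemma bipb_comparison_inverse {P P' : E} (q : Span P A) (g : Span P B) th
  (q' : Span P' A) (g' : Span P' B) th' (h : Span P P') (k : Span P' P) ih ik :
  protocal L -> is_bipb L p f q' g' th' -> Lspan L h -> Lspan L k ->
  phi_iso p f q' g' th' h ih -> phi_iso p f q g th k ik ->
  isocomma_iso p f (scomp q' h) (scomp g' h) ih q g th ->
  isocomma_iso p f (scomp q k) (scomp g k) ik q' g' th' ->
  exists ga, icell (scomp h k) (sid P') ga.
Proof.
  intros HL Hb' Lh Lk Ph Pk Oh Ok.
  pose proof (proj1 (proj1 (proj1 (proj2 (proj2 Hb'))))) as Hth'.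
  apply phi_iso_explicit in Ph, Pk.
  destruct (phi_explicit_ex p f _ _ ih k (phi_explicit_sl p f _ _ _ _ _ Ph)) as [j Lj].
  destruct (phi_explicit_ex p f q' g' th' (scomp h k) Hth') as [ihk Lhk].
  destruct (phi_explicit_ex p f q' g' th' (sid P') Hth') as [iid Lid].
  apply (bipb_reflects_iso q' g' th' _ _ ihk iid Hb'); auto.
  - exact (Lspan_scomp k h HL Lk Lh).
  - exact (protocal_iso L _ HL (iso_id P')).
  - exact (explicit_phi_iso p f _ _ _ _ _ Hth' Lhk).
  - exact (explicit_phi_iso p f _ _ _ _ _ Hth' Lid).
  - eapply isocomma_iso_trans;
      [apply isocomma_iso_sym, (isocomma_iso_assoc p f q' g' th' h k ih j ihk); auto|].
    eapply isocomma_iso_trans; [apply (isocomma_iso_whisker p f _ _ ih q g th k j ik Oh Lj Pk)|].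
    eapply isocomma_iso_trans; [exact Ok | apply isocomma_iso_unit; auto].
Qed.

End BicategoricalPullbacks.

Section RStar.
Context {E : PBCat} (L R : morclass E).
Hypothesis HL : protocal L.
Hypothesis HR : protocal R.

Lemma Rstar_Lspan {U V : E} (s : Span U V) : Rstar R U V s -> Lspan L s.
Proof. intros [Is _]. exact (protocal_iso L _ HL Is). Qed.

Lemma Rstar_of_iso_legs {U V : E} (s : Span U V) : is_iso (sl s) -> is_iso (sr s) -> Rstar R U V s.
Proof. intros Il Ir. split; [exact Il | exact (protocal_iso R _ HR Ir)]. Qed.

Lemma Rstar_of_equiv {U V : E} (s : Span U V) : is_equiv L s -> Rstar R U V s.
Proof.
  intros [_ [e' [a [b [_ [Ia Ib]]]]]]. destruct (equiv_legs_iso s e' a b Ia Ib) as [Il Ir].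
  exact (Rstar_of_iso_legs s Il Ir).
Qed.

Lemma Rstar_icell {U V : E} (s t : Span U V) f0 : Rstar R U V s -> icell s t f0 -> Rstar R U V t.
Proof.
  intros [Is Rs] If. pose proof (icell_iso s t f0 If) as Iso. destruct If as [[C1 C2] _].
  unfold Rstar. rewrite <- C1, <- C2.
  split; [exact (iso_comp _ _ Iso Is) | exact (protocal_comp_iso R _ _ HR Iso Rs)].
Qed.

Lemma Rstar_scomp {U V W : E} (s : Span U V) (t : Span V W) :
  Rstar R U V s -> Rstar R V W t -> Rstar R U W (scomp t s).
Proof.
  intros [Is Rs] [It Rt]. split; cbn [sl sr scomp].
  - exact (iso_comp _ _ (pb1_iso _ _ It) Is).
  - exact (protocal_comp R _ _ HR (protocal_pb2 R _ _ HR Rs) Rt).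
Qed.

(* The two comparison spans between bicategorical pullbacks, supplied by essential surjectivity,
   are mutually inverse up to isomorphism, so they have invertible legs. *)
Lemma bipb_Rstar_transfer {A B C P P' : E} (p : Span A C) (f : Span B C)
  (q : Span P A) (g : Span P B) th (q' : Span P' A) (g' : Span P' B) th' :
  is_bipb L p f q g th -> is_bipb L p f q' g' th' -> Rstar R _ _ g -> Rstar R _ _ g'.
Proof.
  intros Hb Hb' Rg.
  pose proof Hb as [Lq [Lg [Ith Hbx]]]. pose proof Hb' as [Lq' [Lg' [Ith' Hbx']]].
  destruct (proj2 (Hbx' P) q g th Lq Lg Ith) as [h [ih [alh [beh [Lh [Ph [Iah [Ibh Hch]]]]]]]].
  destruct (proj2 (Hbx P') q' g' th' Lq' Lg' Ith')
    as [k [ik [alk [bek [Lk [Pk [Iak [Ibk Hck]]]]]]]].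
  assert (Oh : isocomma_iso p f (scomp q' h) (scomp g' h) ih q g th) by (exists alh, beh; auto).
  assert (Ok : isocomma_iso p f (scomp q k) (scomp g k) ik q' g' th') by (exists alk, bek; auto).
  destruct (bipb_comparison_inverse L p f q g th q' g' th' h k ih ik HL Hb' Lh Lk Ph Pk Oh Ok)
    as [a Ia].
  destruct (bipb_comparison_inverse L p f q' g' th' q g th k h ik ih HL Hb Lk Lh Pk Ph Ok Oh)
    as [b Ib].
  destruct (equiv_legs_iso k h a b Ia Ib) as [Il Ir].
  exact (Rstar_icell _ _ bek (Rstar_scomp k g (Rstar_of_iso_legs k Il Ir) Rg) Ibk).
Qed.

Lemma bipb_Rstar_exists {A B C : E} (p : Span A C) (f : Span B C) :
  compatible L R -> Rstar R _ _ p -> Lspan L f ->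
  exists (P : E) (q : Span P A) (g : Span P B) (th : Hom (apex (scomp f g)) (apex (scomp p q))),
    is_bipb L p f q g th /\ Rstar R _ _ g.
Proof.
  intros [HC1 HC2] [Is Rr] Lf.
  destruct (proj1 (HC1 _ _ (sl f) Lf) _ (pb2 (sr p) (sr f))) as [Y [y [eps Hpi]]].
  assert (Ry : R _ _ y) by exact (HC2 _ _ _ _ _ _ y eps Lf (protocal_pb2 R _ _ HR Rr) Hpi).
  exists Y, (canon_q p f y eps), (span_of y), (canon_th p f y eps).
  split; [exact (canon_is_bipb p f y eps Is Hpi L HL Lf)|].
  split; [exact (iso_id Y) | exact Ry].
Qed.

End RStar.

Theorem lemma4p3 (E : PBCat) (L R : morclass E) :
  protocal L -> protocal R -> compatible L R ->
  (forall (U V : E) (s : Span U V), Rstar R U V s -> Lspan L s) /\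
  bprotocal L (Rstar R).
Proof.
  intros HL HR HC.
  split; [exact (@Rstar_Lspan E L R HL)|].
  split; [exact (@Rstar_Lspan E L R HL)|].
  split; [exact (@Rstar_of_equiv E L R HR)|].
  split; [intros U V s t f0 _ _; exact (Rstar_icell R HR s t f0)|].
  split; [exact (@Rstar_scomp E R HR)|].
  split.
  - intros A B C p f Rp Lf.
    destruct (bipb_Rstar_exists L R HL HR p f HC Rp Lf) as [P [q [g [th [Hb Rg]]]]].
    split; [exists P, q, g, th; exact Hb|].
    intros P' q' g' th' Hb'. exact (bipb_Rstar_transfer L R HL HR p f q g th q' g' th' Hb Hb' Rg).
  - intros A C p [Is _] U. exact (gopfib_of_iso_sl L p U Is).
Qed.
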